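(* The class of directed Linear aTAM systems is not intrinsically universal: there is no finite 1D tile set $U$ (and temperature $\tau'$) with computable $\mathcal{R},S$ such that every directed Linear aTAM system $\mathcal{T}$ is simulated, at some scale $m$ under $\mathcal{R}(\mathcal{T})$, by the Linear aTAM system $(U,S(\mathcal{T}),\tau')$.
   Context: 1D aTAM: a tile type has a west glue and an east glue, each a pair (finite string label, nonnegative integer strength); a tile set is finite. Assemblies are partial functions $\alpha:\mathbb{Z}\dashrightarrow T$ with nonempty interval domain; adjacent tiles interact if the east glue of the left equals the west glue of the right with positive strength; $\alpha$ is $\tau$-stable if every cut between consecutive tiles has strength $\ge\tau$. A system $\mathcal{T}=(T,\sigma,\tau)$ has finite $\tau$-stable seed $\sigma$; growth is by single $\tau$-stable tile additions (finite or infinite sequences, result = limit). The Linear aTAM additionally requires that a tile can be added at empty location $p$ only if there is a path in $\mathbb{Z}$ from $p$ to a point outside the minimal bounding interval of the current assembly avoiding its domain. $\mathcal{A}[\mathcal{T}]$ are producible assemblies, $\mathcal{A}_\Box[\mathcal{T}]$ the producible ones admitting no further tile; $\mathcal{T}$ is directed if $|\mathcal{A}_\Box[\mathcal{T}]|=1$. Simulation: an $m$-block over $S$ is a partial function $\{0,\dots,m-1\}\dashrightarrow S$; $\alpha^m_x$ is $i\mapsto\alpha(mx+i)$. A partial $R$ from $m$-blocks to $T$ is valid if $\alpha\sqsubseteq\beta$, $\alpha\in\mathrm{dom}R$ imply $R(\beta)=R(\alpha)$; $R^*(\alpha')$ is $x\mapsto R(\alpha'^m_x)$. $\alpha'$ maps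 cleanly if each nonempty block at $x$ has $x$ or $x\pm1$ in $\mathrm{dom}\,R^*(\alpha')$ (or at most one nonempty block). $\mathcal{S}$ simulates $\mathcal{T}$ under $R$ if: (i) $R^*$ maps $\mathcal{A}[\mathcal{S}]$ onto $\mathcal{A}[\mathcal{T}]$ and $\mathcal{A}_\Box[\mathcal{S}]$ onto $\mathcal{A}_\Box[\mathcal{T}]$, all producible assemblies mapping cleanly; (ii) producible $\alpha'\to^\mathcal{S}\beta'$ implies $R^*(\alpha')\to^\mathcal{T}R^*(\beta')$; (iii) for every $\alpha\in\mathcal{A}[\mathcal{T}]$ there is $\Pi\subset\mathcal{A}[\mathcal{S}]$ with $R^*=\alpha$ on $\Pi$ such that for every producible $\beta$ with $\alpha\to^\mathcal{T}\beta$: each $\alpha'\in\Pi$ produces some $\beta'$ with $R^*(\beta')=\beta$, and whenever producible $\alpha''\to^\mathcal{S}\beta'$ with $R^*(\alpha'')=\alpha$, $R^*(\beta')=\beta$, some $\alpha'\in\Pi$ produces $\alpha''$. *)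

From HB Require Import structures.
From mathcomp Require Import all_boot all_order all_algebra.
Set Implicit Arguments. Unset Strict Implicit. Unset Printing Implicit Defensive.
Import Order.TTheory GRing.Theory Num.Theory.
Local Open Scope ring_scope.

Inductive rf : Type :=
| RZero | RSucc | RProj (i : nat) | RComp (f : rf) (gs : list rf)
| RPrec (f g : rf) | RMu (f : rf).

Inductive rf_eval : rf -> seq nat -> nat -> Prop :=
| ev_zero v : rf_eval RZero v 0
| ev_succ x v : rf_eval RSucc (x :: v) x.+1
| ev_proj i v : (i < size v)%N -> rf_eval (RProj i) v (nth 0%N v i)
| ev_comp f gs v ws y : rf_evals gs v ws -> rf_eval f ws y -> rf_eval (RComp f gs) v y
| ev_prec0 f g v y : rf_eval f v y -> rf_eval (RPrec f g) (0%N :: v) y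
| ev_precS f g n v r y : rf_eval (RPrec f g) (n :: v) r -> rf_eval g (n :: r :: v) y ->
    rf_eval (RPrec f g) (n.+1 :: v) y
| ev_mu f v n : rf_eval f (n :: v) 0 ->
    (forall k, (k < n)%N -> exists r, rf_eval f (k :: v) r.+1) -> rf_eval (RMu f) v n
with rf_evals : seq rf -> seq nat -> seq nat -> Prop :=
| evs_nil v : rf_evals [::] v [::]
| evs_cons g gs v y ys : rf_eval g v y -> rf_evals gs v ys -> rf_evals (g :: gs) v (y :: ys).

Definition computable_map (A B : countType) (f : A -> B) : Prop :=
  exists p : rf, forall x : A, rf_eval p [:: pickle x] (pickle (f x)).

(* A glue: (label, strength); labels are finite strings over nat. *)
Definition glue := (seq nat * nat)%type.
Definition tile := (glue * glue)%type.
Definition west (t : tile) : glue := t.1.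
Definition east (t : tile) : glue := t.2.

Definition asm := int -> option tile.

Definition indom (a : asm) (z : int) : bool := a z != None.

Definition is_assembly (Ts : seq tile) (a : asm) : Prop :=
  (exists z, indom a z) /\
  (forall x y z : int, x <= y -> y <= z -> indom a x -> indom a z -> indom a y) /\
  (forall z t, a z = Some t -> t \in Ts).

Definition bond (t1 t2 : tile) : nat :=
  if east t1 == west t2 then (east t1).2 else 0%N.

Definition stable (tau : nat) (a : asm) : Prop :=
  forall z t1 t2, a z = Some t1 -> a (z + 1) = Some t2 -> (tau <= bond t1 t2)%N.

Definition seedT := (int * seq tile)%type.
Definition seed_asm (s : seedT) : asm :=
  fun z => if s.1 <= z then nth None (map Some s.2) `|z - s.1|%N else None.

Definition system := (seq tile * seedT * nat)%type.
Definition tiles_of (T : system) : seq tile := T.1.1.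
Definition seed_of (T : system) : seedT := T.1.2.
Definition temp_of (T : system) : nat := T.2.

Definition valid_system (T : system) : Prop :=
  (0 < temp_of T)%N /\ (seed_of T).2 != [::] /\
  all (fun t => t \in tiles_of T) (seed_of T).2 /\
  stable (temp_of T) (seed_asm (seed_of T)).

Definition outside_bbox (a : asm) (q : int) : Prop :=
  (forall z, indom a z -> q < z) \/ (forall z, indom a z -> z < q).

(* Linear aTAM condition: a path in Z from p to outside the bounding
   interval of a, avoiding dom a. *)
Definition linear_ok (a : asm) (p : int) : Prop :=
  exists q, outside_bbox a q /\
    (forall z, Num.min p q <= z -> z <= Num.max p q -> ~~ indom a z).

Definition step (T : system) (a b : asm) : Prop :=
  exists p t, a p = None /\ t \in tiles_of T /\
    (forall z, b z = if z == p then Some t else a z) /\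
    is_assembly (tiles_of T) b /\ stable (temp_of T) b /\ linear_ok a p.

(* a ->^T b : finite or infinite assembly sequence, result = limit
   (stuttering steps allowed, so finite sequences are covered). *)
Definition produces (T : system) (a b : asm) : Prop :=
  exists s : nat -> asm, s 0%N =1 a /\
    (forall i, step T (s i) (s i.+1) \/ s i.+1 =1 s i) /\
    (forall z, exists N, forall n, (N <= n)%N -> s n z = b z).

Definition producible (T : system) (a : asm) : Prop :=
  produces T (seed_asm (seed_of T)) a.

Definition terminal (T : system) (a : asm) : Prop :=
  producible T a /\ ~ exists b, step T a b.

Definition directed (T : system) : Prop :=
  exists a, terminal T a /\ forall b, terminal T b -> b =1 a.

Definition block := seq (option tile).
Definition blk (m : nat) (a : asm) (x : int) : block :=
  [seq a (m%:Z * x + i%:Z) | i <- iota 0 m].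

(* A representation function: scale m and a finite table giving the partial
   map from m-blocks to tiles (first matching entry). *)
Definition rep_fun := (nat * seq (block * tile))%type.

Definition Rlook (tbl : seq (block * tile)) (b : block) : option tile :=
  match [seq e <- tbl | e.1 == b] with e :: _ => Some e.2 | [::] => None end.

Definition Rstar (R : rep_fun) (a : asm) : asm := fun x => Rlook R.2 (blk R.1 a x).

Definition block_over (U : seq tile) (m : nat) (b : block) : Prop :=
  size b = m /\ forall i t, nth None b i = Some t -> t \in U.

Definition subblock (b1 b2 : block) : Prop :=
  size b1 = size b2 /\ forall i t, nth None b1 i = Some t -> nth None b2 i = Some t.

Definition valid_repr (U : seq tile) (R : rep_fun) : Prop :=
  forall b1 b2, block_over U R.1 b1 -> block_over U R.1 b2 ->
    subblock b1 b2 -> Rlook R.2 b1 <> None -> Rlook R.2 b2 = Rlook R.2 b1.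

Definition nonempty_block (m : nat) (a : asm) (x : int) : Prop :=
  exists i, (i < m)%N /\ indom a (m%:Z * x + i%:Z).

Definition maps_cleanly (R : rep_fun) (a : asm) : Prop :=
  (forall x, nonempty_block R.1 a x ->
     exists u : int, -1 <= u /\ u <= 1 /\ indom (Rstar R a) (x + u)) \/
  (forall x y, nonempty_block R.1 a x -> nonempty_block R.1 a y -> x = y).

Definition simulates (S T : system) (R : rep_fun) : Prop :=
  (0 < R.1)%N /\ valid_repr (tiles_of S) R /\
  (forall e, e \in R.2 -> e.2 \in tiles_of T) /\
  (forall a', producible S a' -> producible T (Rstar R a')) /\
  (forall a, producible T a -> exists a', producible S a' /\ Rstar R a' =1 a) /\
  (forall a', terminal S a' -> terminal T (Rstar R a')) /\
  (forall a, terminal T a -> exists a', terminal S a' /\ Rstar R a' =1 a) /\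
  (forall a', producible S a' -> maps_cleanly R a') /\
  (forall a' b', producible S a' -> producible S b' -> produces S a' b' ->
     produces T (Rstar R a') (Rstar R b')) /\
  (forall a, producible T a ->
    exists Pi : asm -> Prop,
      (forall a', Pi a' -> producible S a' /\ Rstar R a' =1 a) /\
      (forall b, producible T b -> produces T a b ->
        (forall a', Pi a' -> exists b', produces S a' b' /\ Rstar R b' =1 b) /\
        (forall a'' b', producible S a'' -> produces S a'' b' ->
           Rstar R a'' =1 a -> Rstar R b' =1 b ->
           exists a', Pi a' /\ produces S a' a''))).

(* The chain system of N + 1 tiles, each binding only to its successor at
   temperature 1, is directed, with the segment [0, N] as terminal assembly.
   Suppose (U, S, tau') simulates it at scale m.  Its terminal assembly fills
   the blocks 0..N, while the seed lies in the blocks -1..1, so for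
   N >= |U| + 3 some tile repeats among |U| + 1 consecutive positions right of
   the seed.  Cutting the assembly after the first occurrence and repeating
   the stretch between the two occurrences forever gives an assembly that U
   still produces, since in the Linear aTAM a tile can always be attached at
   the right end.  Its nonempty blocks reach arbitrarily far right, whereas
   clean mapping keeps the nonempty blocks of a producible assembly within one
   block of its image, which lies in [0, N]. *)

From mathcomp Require Import all_boot all_order all_algebra.
From mathcomp Require Import zify.
Set Implicit Arguments. Unset Strict Implicit. Unset Printing Implicit Defensive.
Import Order.TTheory GRing.Theory Num.Theory.
Local Open Scope ring_scope.

Definition interval_dom (e : asm) : Prop :=
  forall x y z : int, x <= y -> y <= z -> indom e x -> indom e z -> indom e y.

Definition tiled_by (Ts : seq tile) (e : asm) : Prop :=
  forall z t, e z = Some t -> t \in Ts.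

Definition well_formed (Sy : system) (e : asm) : Prop :=
  [/\ forall z t, seed_asm (seed_of Sy) z = Some t -> e z = Some t,
      interval_dom e, tiled_by (tiles_of Sy) e & stable (temp_of Sy) e].

Lemma nth_map_Some (T : Type) (x0 : T) (s : seq T) k :
  nth None (map Some s) k = if (k < size s)%N then Some (nth x0 s k) else None.
Proof.
case: ltnP => ks; first by rewrite (nth_map x0).
by rewrite nth_default // size_map.
Qed.

Lemma seed_asm_Some (s : seedT) z t : seed_asm s z = Some t ->
  [/\ s.1 <= z, z < s.1 + (size s.2)%:Z & t \in s.2].
Proof.
rewrite /seed_asm; case: ifP => // le_z.
rewrite (nth_map_Some t); case: ifP => // lt_z [<-].
by split; [| lia | exact: mem_nth].
Qed.

Lemma producible_seed Sy : producible Sy (seed_asm (seed_of Sy)).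
Proof. by exists (fun=> seed_asm (seed_of Sy)); do !split => //; [right | exists 0%N]. Qed.

Lemma step_ext Sy a a' b : a =1 a' -> step Sy a b -> step Sy a' b.
Proof.
move=> aa' [p [t [ap [pt [eb [asm_b [st_b [q [q_out q_path]]]]]]]]].
exists p, t; do !split => //; first by rewrite -aa'.
- by move=> z; rewrite eb aa'.
- exists q; split; last by move=> z ? ?; rewrite /indom -aa'; exact: q_path.
  by case: q_out => out; [left | right] => z; rewrite /indom -aa'; exact: out.
Qed.

Lemma eventually_agree (s : nat -> asm) (b : asm) (zs : seq int) :
  (forall z, exists N, forall n, (N <= n)%N -> s n z = b z) ->
  exists N, forall n, (N <= n)%N -> {in zs, s n =1 b}.
Proof.
move=> conv; elim: zs => [|z zs [N IH]]; first by exists 0%N.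
have [Nz hz] := conv z; exists (maxn N Nz) => n; rewrite geq_max => /andP [hN hNz] w.
by rewrite inE => /predU1P [-> | /(IH _ hN)]; first exact: hz.
Qed.

Section ProducedLimits.

Variables (Sy : system) (P : asm -> Prop).
Hypothesis P_ext : forall c c', c =1 c' -> P c -> P c'.
Hypothesis P_step : forall c c', P c -> step Sy c c' -> P c'.

Lemma produces_approx a b : P a -> produces Sy a b ->
  forall zs : seq int, exists2 c, P c & {in zs, c =1 b}.
Proof.
move=> Pa [s [s0 [hs conv]]] zs.
have Ps n : P (s n).
  elim: n => [|n IH]; first exact: P_ext Pa.
  by case: (hs n) => [/(P_step IH) // | e]; apply: P_ext IH => z; rewrite e.
by have [N hN] := eventually_agree zs conv; exists (s N) => //; exact: hN.
Qed.

Variable b : asm.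
Hypothesis b_approx : forall zs : seq int, exists2 c, P c & {in zs, c =1 b}.

Lemma limit_pointwise (Q : int -> option tile -> Prop) :
  (forall c, P c -> forall z, Q z (c z)) -> forall z, Q z (b z).
Proof. by move=> hQ z; have [c /hQ Pc /(_ z)] := b_approx [:: z]; rewrite mem_head => <-. Qed.

Lemma limit_interval : (forall c, P c -> interval_dom c) -> interval_dom b.
Proof.
move=> hI x y z; have [c /hI Ic cb] := b_approx [:: x; y; z].
by rewrite /indom -!cb ?inE ?eqxx ?orbT //; exact: Ic.
Qed.

Lemma limit_stable tau : (forall c, P c -> stable tau c) -> stable tau b.
Proof.
move=> hS z t1 t2; have [c /hS Sc cb] := b_approx [:: z; z + 1].
by rewrite -!cb ?inE ?eqxx ?orbT //; exact: Sc.
Qed.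

End ProducedLimits.

Lemma well_formed_ext Sy c c' : c =1 c' -> well_formed Sy c -> well_formed Sy c'.
Proof.
move=> e [h1 h2 h3 h4]; split.
- by move=> z t /h1; rewrite e.
- by move=> x y z; rewrite /indom -!e; apply: h2.
- by move=> z t; rewrite -e; apply: h3.
- by move=> z t1 t2; rewrite -!e; apply: h4.
Qed.

Lemma well_formed_step Sy c c' : well_formed Sy c -> step Sy c c' -> well_formed Sy c'.
Proof.
move=> [seed_c _ _ _] [p [t [cp [_ [ec' [[_ [Ic' Tc']] [Sc' _]]]]]]]; split => //.
by move=> z t' /seed_c cz; rewrite ec'; case: eqP => // ezp; rewrite -ezp cz in cp.
Qed.

Lemma well_formed_seed Sy : valid_system Sy -> well_formed Sy (seed_asm (seed_of Sy)).
Proof.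
case=> _ [_ [seed_tiles seed_st]]; split => //.
- move=> x y z xy yz; rewrite /indom.
  case ex: seed_asm => [tx|] //; case ez: seed_asm => [tz|] // _ _.
  have [? ? _] := seed_asm_Some ex; have [? ? _] := seed_asm_Some ez.
  rewrite /seed_asm; case: ifP; last lia.
  by rewrite (nth_map_Some tx); case: ifP => //; lia.
- by move=> z t /seed_asm_Some [_ _ /(allP seed_tiles)].
Qed.

Lemma producible_well_formed Sy e : valid_system Sy -> producible Sy e -> well_formed Sy e.
Proof.
move=> vS.
move/(produces_approx (@well_formed_ext Sy) (@well_formed_step Sy) (well_formed_seed vS)).
move=> approx; split.
- apply: (limit_pointwise approx
    (Q := fun z o => forall t, seed_asm (seed_of Sy) z = Some t -> o = Some t)).
  by move=> c [].
- by apply: (limit_interval approx) => c [].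
- apply: (limit_pointwise approx (Q := fun z o => forall t, o = Some t -> t \in tiles_of Sy)).
  by move=> c [].
- by apply: (limit_stable approx) => c [].
Qed.

Definition restrict (lo hi : int) (e : asm) : asm :=
  fun z => if (lo <= z) && (z <= hi) then e z else None.

Lemma indom_restrict lo hi e z :
  indom (restrict lo hi e) z = (lo <= z <= hi) && indom e z.
Proof. by rewrite /indom /restrict; case: ifP. Qed.

Lemma restrict_interval lo hi e : interval_dom e -> interval_dom (restrict lo hi e).
Proof.
move=> Ie x y z xy yz; rewrite !indom_restrict => /andP [? ex] /andP [? ez].
by apply/andP; split; [lia | exact: Ie ex ez].
Qed.

Lemma restrict_tiled Ts lo hi e : tiled_by Ts e -> tiled_by Ts (restrict lo hi e).
Proof. by move=> Te z t; rewrite /restrict; case: ifP => // _ /Te. Qed.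

Lemma restrict_stable tau lo hi e : stable tau e -> stable tau (restrict lo hi e).
Proof.
by move=> Se z t1 t2; rewrite /restrict; case: ifP => // _ ?; case: ifP => // _; exact: Se.
Qed.

Lemma linear_ok_sub a a' p : (forall z, indom a' z -> indom a z) ->
  linear_ok a p -> linear_ok a' p.
Proof.
move=> sub [q [q_out q_path]]; exists q; split.
  by case: q_out => out; [left | right] => z /sub; exact: out.
by move=> z z1 z2; apply: contra (q_path z z1 z2); exact: sub.
Qed.

Lemma linear_ok_right a p : (forall z, indom a z -> z < p) -> linear_ok a p.
Proof.
move=> a_left; exists p; split; first by right.
move=> z; rewrite Order.POrderTheory.minxx Order.POrderTheory.maxxx => pz zp.
by apply: contraTN isT => /a_left; lia.
Qed.

Lemma step_restrict Sy lo hi a b : step Sy a b ->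
  step Sy (restrict lo hi a) (restrict lo hi b) \/ restrict lo hi b =1 restrict lo hi a.
Proof.
move=> [p [t [ap [pt [eb [[_ [Ib Tb]] [Sb lin]]]]]]].
have [p_in | p_out] := boolP ((lo <= p) && (p <= hi)); last first.
  by right => z; rewrite /restrict eb; case: eqP => // ->; rewrite (negbTE p_out).
left; exists p, t; do !split => //.
- by rewrite /restrict p_in.
- by move=> z; rewrite /restrict eb; case: eqP => // ->; rewrite p_in.
- by exists p; rewrite indom_restrict p_in /indom eb eqxx.
- exact: restrict_interval.
- exact: restrict_tiled.
- exact: restrict_stable.
- by apply: linear_ok_sub lin => z; rewrite indom_restrict => /andP [].
Qed.

Lemma step_extend_right Sy c lo h t :
  interval_dom c -> tiled_by (tiles_of Sy) c -> stable (temp_of Sy) c ->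
  lo <= h + 1 -> c (h + 1) = Some t ->
  step Sy (restrict lo h c) (restrict lo (h + 1) c).
Proof.
move=> Ic Tc Sc lo_h ch; exists (h + 1), t; do !split.
- by rewrite /restrict; case: ifP => //; lia.
- exact: Tc ch.
- move=> z; rewrite /restrict; case: eqP => [-> | ?].
    by rewrite ch; case: ifP => //; lia.
  by case: ifP => ?; case: ifP => ? //; lia.
- by exists (h + 1); rewrite indom_restrict /indom ch; apply/andP; split => //; lia.
- exact: restrict_interval.
- exact: restrict_tiled.
- exact: restrict_stable.
- by apply: linear_ok_right => z; rewrite indom_restrict => /andP [? _]; lia.
Qed.

Definition chain_tile (N k : nat) : tile :=
  ((if k == 0%N then ([::], 0%N) else ([:: k], 1%N)),
   (if k == N then ([::], 0%N) else ([:: k.+1], 1%N))).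

Definition chain_system (N : nat) : system :=
  (map (chain_tile N) (iota 0 N.+1), (0, [:: chain_tile N 0]), 1%N).

Definition chain_full (N : nat) : asm :=
  fun z => if (0 <= z) && (z <= N%:Z) then Some (chain_tile N `|z|%N) else None.

Definition chain_inv (N : nat) (e : asm) : Prop :=
  [/\ forall z t, e z = Some t -> [/\ 0 <= z, z <= N%:Z & t = chain_tile N `|z|%N],
      indom e 0 & interval_dom e].

Lemma chain_bond N j k :
  bond (chain_tile N j) (chain_tile N k) = ((j != N) && (k == j.+1) : nat).
Proof.
rewrite /bond /east /west /chain_tile /=.
case: (j =P N) => [_ | _]; first by case: ifP.
case: (k =P 0%N) => [-> | _] //=.
by case: eqP => [[->] | ne]; [rewrite eqxx | case: eqP => // kj; case: ne; rewrite kj].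
Qed.

Lemma chain_tilesP N t :
  reflect (exists2 k, (k <= N)%N & t = chain_tile N k) (t \in tiles_of (chain_system N)).
Proof.
apply: (iffP mapP) => [[k] | [k kN ->]]; last by exists k; rewrite // mem_iota.
by rewrite mem_iota => /andP [_ ?] ->; exists k.
Qed.

Lemma chain_seed N : seed_asm (seed_of (chain_system N)) =1 restrict 0 0 (chain_full N).
Proof.
move=> z; rewrite /seed_asm /restrict /chain_full /=.
case: (z =P 0) => [-> // | nz]; do 2 case: ifP => //; try lia.
by move=> *; rewrite nth_default //=; lia.
Qed.

Lemma chain_full_interval N : interval_dom (chain_full N).
Proof. by move=> x y z; rewrite /indom /chain_full; do 3 case: ifP => //; lia. Qed.

Lemma chain_full_tiled N : tiled_by (tiles_of (chain_system N)) (chain_full N).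
Proof.
move=> z t; rewrite /chain_full; case: ifP => // ? [<-].
by apply/chain_tilesP; exists `|z|%N => //; lia.
Qed.

Lemma chain_full_stable N : stable 1 (chain_full N).
Proof.
move=> z t1 t2; rewrite /chain_full; case: ifP => // ? [<-]; case: ifP => // ? [<-].
by rewrite chain_bond (_ : absz (z + 1)%R = (absz z).+1) ?eqxx ?andbT; [apply/eqP; lia | lia].
Qed.

Lemma chain_valid N : valid_system (chain_system N).
Proof.
do !split => //=; first by rewrite andbT; apply/chain_tilesP; exists 0%N.
move=> z t1 t2; rewrite !chain_seed.
exact: (restrict_stable (@chain_full_stable N) (z := z)).
Qed.

Lemma chain_grow N k : (k < N)%N ->
  step (chain_system N)
    (restrict 0 k%:Z (chain_full N)) (restrict 0 k.+1%:Z (chain_full N)).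
Proof.
move=> kN; rewrite (_ : k.+1%:Z = k%:Z + 1); last lia.
apply: (step_extend_right (t := chain_tile N k.+1)) => //.
- exact: chain_full_interval.
- exact: chain_full_tiled.
- exact: chain_full_stable.
- by rewrite /chain_full; case: ifP; [move=> _; congr (Some (chain_tile _ _)) | ]; lia.
Qed.

Lemma chain_full_producible N : producible (chain_system N) (chain_full N).
Proof.
exists (fun n => restrict 0 (minn n N)%:Z (chain_full N)); do !split.
- by move=> z; rewrite chain_seed min0n.
- move=> n /=; have [nN | Nn] := ltnP n N.
    by left; rewrite (minn_idPl nN); exact: chain_grow.
  by right; rewrite (minn_idPr (leqW Nn)).
- move=> z; exists N => n Nn; rewrite (minn_idPr Nn) /restrict /chain_full.
  by case: (_ && _).
Qed.

Lemma chain_inv_ext N c c' : c =1 c' -> chain_inv N c -> chain_inv N c'.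
Proof.
move=> e [h1 h2 h3]; split.
- by move=> z t; rewrite -e; exact: h1.
- by rewrite /indom -e.
- by move=> x y z; rewrite /indom -!e; exact: h3.
Qed.

Lemma chain_inv_step N a b : chain_inv N a -> step (chain_system N) a b -> chain_inv N b.
Proof.
move=> [a_chain a0 _] [p [t [ap [/chain_tilesP [k kN ->] [eb [[_ [Ib _]] [Sb _]]]]]]].
have bp : b p = Some (chain_tile N k) by rewrite eb eqxx.
have b_old z : z != p -> b z = a z by rewrite eb => /negbTE ->.
have p0 : p != 0 by apply: contraTneq a0 => <-; rewrite /indom ap.
have b0 : indom b 0 by rewrite /indom b_old // eq_sym.
suff [p_ge0 p_le ek] : [/\ 0 <= p, p <= N%:Z & k = `|p|%N].
  split=> // z t'; rewrite eb; case: eqP => [-> [<-] | _]; [by rewrite ek | exact: a_chain].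
(* The new tile binds to its neighbour towards 0, so by chain_bond it is that
   neighbour's successor; to the left of 0 this is impossible, since tile 0 has
   no west glue. *)
have [p_gt0 | p_le0] := ltrP 0 p.
- have : indom b (p - 1) by apply: (Ib 0 _ p); rewrite /indom ?bp //; lia.
  rewrite /indom b_old; last by apply/eqP; lia.
  case ea: (a (p - 1)) => [t'|//] _; have [_ _ et'] := a_chain _ _ ea.
  have := Sb (p - 1) t' (chain_tile N k); rewrite b_old ?ea; last by apply/eqP; lia.
  rewrite (_ : p - 1 + 1 = p) ?bp ?et' ?chain_bond ?lt0b; last lia.
  by move=> /(_ erefl erefl) /andP [/eqP ? /eqP ?]; split; lia.
- have : indom b (p + 1) by apply: (Ib p _ 0); rewrite /indom ?bp //; lia.
  rewrite /indom b_old; last by apply/eqP; lia.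
  case ea: (a (p + 1)) => [t'|//] _; have [? _ et'] := a_chain _ _ ea.
  have := Sb p (chain_tile N k) t'; rewrite bp b_old ?ea; last by apply/eqP; lia.
  by rewrite et' chain_bond lt0b => /(_ erefl erefl) /andP [_ /eqP]; lia.
Qed.

Lemma chain_producible_inv N b : producible (chain_system N) b -> chain_inv N b.
Proof.
have seed_inv : chain_inv N (seed_asm (seed_of (chain_system N))).
  apply: chain_inv_ext (fun z => esym (chain_seed N z)) _; split.
  - move=> z t; rewrite /restrict /chain_full; do 2 case: ifP => //.
    by move=> ? ? [<-]; split => //; lia.
  - by [].
  - exact/restrict_interval/chain_full_interval.
move/(produces_approx (@chain_inv_ext N) (@chain_inv_step N) seed_inv) => approx; split.
- apply: (limit_pointwise approx (Q := fun z o => forall t, o = Some t ->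
    [/\ 0 <= z, z <= N%:Z & t = chain_tile N `|z|%N])).
  by move=> c [].
- apply: (limit_pointwise approx (Q := fun z o => z = 0 -> o != None)) => //.
  by move=> c [_ c0 _] z ->.
- by apply: (limit_interval approx) => c [].
Qed.

Lemma chain_inv_prefix N b : chain_inv N b ->
  exists2 k, (k <= N)%N & b =1 restrict 0 k%:Z (chain_full N).
Proof.
move=> [b_chain b0 Ib].
have b_gap : exists k, b k.+1%:Z == None.
  exists N; apply/eqP; case eb: b => [t|] //; have [_ ? _] := b_chain _ _ eb; lia.
have [k /eqP bk k_min] := ex_minnP b_gap.
have b_in z : 0 <= z <= k%:Z -> indom b z.
  case: (z =P 0) => [-> // | nz /andP [z0 zk]].
  apply/negP => /eqP bz; have := k_min `|z - 1|%N.
  by rewrite (_ : `|z - 1|%N.+1%:Z = z) ?bz ?eqxx; [move=> /(_ isT); lia | lia].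
have b_out z : k%:Z < z -> ~~ indom b z.
  move=> kz; apply/negP => bz; have : indom b k.+1%:Z by apply: (Ib 0 _ z) => //; lia.
  by rewrite /indom bk.
have := b_in k%:Z; rewrite /indom; case bK: b => [t|]; last by rewrite eqxx; lia.
have [_ kN _] := b_chain _ _ bK; move=> _; exists k; first lia.
move=> z; rewrite /restrict /chain_full; case: ifP => [/b_in | zk].
  rewrite /indom; case bz: b => [t'|] // _.
  by have [? ? ->] := b_chain _ _ bz; case: ifP => //; lia.
case: (ltrP k%:Z z) => [/b_out | kz]; first by rewrite /indom; case: (b z).
by case bz: b => [t'|] //; have [? _ _] := b_chain _ _ bz; lia.
Qed.

Lemma chain_full_terminal N : terminal (chain_system N) (chain_full N).
Proof.
split; first exact: chain_full_producible.
move=> [b st]; have [p [t [ap [_ [eb _]]]]] := st.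
have [b_chain _ _] := chain_inv_step (chain_producible_inv (chain_full_producible N)) st.
have bp : b p = Some t by rewrite eb eqxx.
have [? ? _] := b_chain p t bp.
by move: ap; rewrite /chain_full; case: ifP => //; lia.
Qed.

Lemma chain_directed N : directed (chain_system N).
Proof.
exists (chain_full N); split=> [|b [pb b_term]]; first exact: chain_full_terminal.
have [k kN eb] := chain_inv_prefix (chain_producible_inv pb).
have [kN' | Nk] := ltnP k N.
  case: b_term; exists (restrict 0 k.+1%:Z (chain_full N)).
  by apply: step_ext (chain_grow kN') => z; rewrite eb.
move=> z; rewrite eb /restrict /chain_full (_ : k = N); last lia.
by case: (_ && _).
Qed.

Lemma blk_over Ts m e x : tiled_by Ts e -> block_over Ts m (blk m e x).
Proof.
move=> Te; split=> [|i t]; first by rewrite size_map size_iota.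
case: (ltnP i m) => im; last by rewrite nth_default // size_map size_iota.
by rewrite (nth_map 0%N) ?size_iota // nth_iota // add0n => /Te.
Qed.

Lemma empty_block_unmapped Ts R e y : valid_repr Ts R -> tiled_by Ts e ->
  Rstar R e y = None -> Rlook R.2 (nseq R.1 None) = None.
Proof.
move=> vR Te ey; case E: Rlook => [t|] //.
have empty_sub : subblock (nseq R.1 None) (blk R.1 e y).
  by split=> [|i t']; rewrite ?size_nseq ?size_map ?size_iota // nth_nseq; case: ifP.
have empty_over : block_over Ts R.1 (nseq R.1 None).
  by split=> [|i t']; rewrite ?size_nseq // nth_nseq; case: ifP.
by move: ey; rewrite /Rstar (vR _ _ empty_over (blk_over _ _ Te) empty_sub) ?E.
Qed.

Lemma mapped_block_nonempty R e x : Rlook R.2 (nseq R.1 None) = None ->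
  indom (Rstar R e) x -> nonempty_block R.1 e x.
Proof.
move=> empty mapped.
have [/hasP [i] | none] := boolP (has (fun i => indom e (R.1%:Z * x + i%:Z)) (iota 0 R.1)).
  by rewrite mem_iota add0n => /andP [_ iR] ei; exists i.
move: mapped; rewrite /indom /Rstar.
suff -> : blk R.1 e x = nseq R.1 None by rewrite empty eqxx.
rewrite /blk; set s := map _ _; have -> : R.1 = size s by rewrite size_map size_iota.
apply/all_pred1P; rewrite all_map; apply/allP => i iR /=.
by apply: contraNT none => ei; apply/hasP; exists i.
Qed.

Lemma nonempty_block_indom m e z : (0 < m)%N -> indom e z ->
  exists2 x, nonempty_block m e x & m%:Z * x <= z < m%:Z * (x + 1).
Proof.
move=> m_gt0 ez; have m0 : m%:Z != 0 by rewrite eqz_nat -lt0n.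
have r_ge0 := modz_ge0 z m0; have r_lt : (z %% m%:Z)%Z < m%:Z by apply: ltz_pmod; lia.
have ediv := divz_eq z m%:Z.
exists (z %/ m%:Z)%Z; last by apply/andP; split; nia.
by exists `|(z %% m%:Z)%Z|%N; split; [lia | rewrite (_ : _ + _ = z) //; lia].
Qed.

Lemma clean_block_near R e lo hi x y : maps_cleanly R e ->
  (forall x, indom (Rstar R e) x -> lo <= x <= hi) ->
  nonempty_block R.1 e x -> nonempty_block R.1 e y -> x <> y -> lo - 1 <= x <= hi + 1.
Proof.
move=> [near | single] image_bound ex ey xy; last by case: xy; exact: single.
by have [u [? [? /image_bound]]] := near _ ex; lia.
Qed.

Section Pumping.

Variables (Sy : system) (a : asm) (lo p : int) (d : nat).
Hypotheses (a_int : interval_dom a) (a_tiled : tiled_by (tiles_of Sy) a)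
  (a_stable : stable (temp_of Sy) a).
Hypotheses (d_gt0 : (0 < d)%N) (lo_le_p : lo <= p) (a_p : indom a p)
  (a_period : a (p + d%:Z) = a p).

Definition pumped : asm :=
  fun z => if z < lo then None else if z <= p then a z
           else a (p + (`|z - p| %% d)%N%:Z).

Lemma pumped_left z : lo <= z -> z <= p -> pumped z = a z.
Proof. by move=> lo_z z_p; rewrite /pumped ltNge lo_z z_p. Qed.

Lemma pumped_shift (k : nat) : pumped (p + k%:Z) = a (p + (k %% d)%N%:Z).
Proof.
rewrite /pumped ifF; last lia.
case: ifP => [? | _]; last by rewrite (_ : absz (p + k%:Z - p)%R = k) //; lia.
by rewrite (_ : k = 0%N) ?mod0n //; lia.
Qed.

Lemma indom_period (r : nat) : (r <= d)%N -> indom a (p + r%:Z).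
Proof.
move=> rd; apply: (a_int (x := p) (z := p + d%:Z)) => //; try lia.
by rewrite /indom a_period.
Qed.

Lemma pumped_right z : p < z -> indom pumped z.
Proof.
move=> pz; rewrite (_ : z = p + (absz (z - p)%R)%:Z); last lia.
by rewrite /indom pumped_shift; apply/indom_period/ltnW/ltn_pmod.
Qed.

Lemma pumped_interval : interval_dom pumped.
Proof.
move=> x y z xy yz px pz; have [py | yp] := ltrP p y; first exact: pumped_right.
have lo_x : lo <= x.
  by move: px; rewrite /indom /pumped; case: ifP => [_ | ?]; [rewrite eqxx | lia].
have x_p : x <= p by lia.
have lo_y : lo <= y by lia.
move: px; rewrite /indom (pumped_left lo_x x_p) (pumped_left lo_y yp) => ax.
have [_ | zp] := ltrP p z; first exact: a_int xy yp ax a_p.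
have lo_z : lo <= z by lia.
by move: pz; rewrite /indom (pumped_left lo_z zp); exact: a_int xy yz ax.
Qed.

Lemma pumped_tiled : tiled_by (tiles_of Sy) pumped.
Proof. by move=> z t; rewrite /pumped; case: ifP => // _; case: ifP => _ /a_tiled. Qed.

Lemma pumped_stable : stable (temp_of Sy) pumped.
Proof.
move=> z t1 t2; case: (ltrP z p) => zp.
  case: (ltrP z lo) => [zlo | loz]; first by rewrite /pumped zlo.
  have [-> ->] : pumped z = a z /\ pumped (z + 1) = a (z + 1).
    by split; apply: pumped_left; lia.
  exact: a_stable.
have [k ->] : exists k : nat, z = p + k%:Z by exists (absz (z - p)%R); lia.
rewrite (_ : p + k%:Z + 1 = p + k.+1%:Z); last lia.
rewrite !pumped_shift -addn1 -modnDml addn1.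
have r_lt : (k %% d < d)%N by rewrite ltn_pmod.
have [r1_lt | r1_ge] := ltnP (k %% d).+1 d.
  rewrite (modn_small r1_lt) (_ : p + (k %% d).+1%:Z = p + (k %% d)%N%:Z + 1); last lia.
  exact: a_stable.
rewrite (_ : (k %% d).+1 = d); last lia.
rewrite modnn addr0 -a_period (_ : p + d%:Z = p + (k %% d)%N%:Z + 1); last lia.
exact: a_stable.
Qed.

Lemma pumped_grow h : p <= h ->
  step Sy (restrict lo h pumped) (restrict lo (h + 1) pumped).
Proof.
move=> ph; have : indom pumped (h + 1) by apply: pumped_right; lia.
rewrite /indom; case E: pumped => [t|] // _.
by apply: (step_extend_right pumped_interval pumped_tiled pumped_stable _ E); lia.
Qed.

Lemma pumped_producible : producible Sy a ->
  (forall z, indom (seed_asm (seed_of Sy)) z -> lo <= z <= p) -> producible Sy pumped.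
Proof.
move=> [s [s0 [s_steps conv]]] seed_in.
pose window := [seq lo + i%:Z | i <- iota 0 (absz (p - lo)%R).+1].
have [N0 agree] := eventually_agree window conv.
have agree_N0 : restrict lo p (s N0) =1 restrict lo p pumped.
  move=> z; rewrite /restrict; case: ifP => // /andP [lo_z z_p].
  rewrite pumped_left // agree //; apply/mapP; exists (absz (z - lo)%R); last lia.
  by rewrite mem_iota; lia.
(* Replay the production of a inside [lo, p] until it is complete there, then
   attach the periodic continuation one tile at a time. *)
pose u i := if (i <= N0)%N then restrict lo p (s i)
            else restrict lo (p + (i - N0)%:Z) pumped.
exists u; split; [|split].
- move=> z; rewrite /u /= /restrict s0; case: ifP => // z_out.
  by case E: seed_asm => [t|] //; have := seed_in z; rewrite /indom E => /(_ isT); lia.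
- move=> i; rewrite /u; have [iN | Ni] := ltnP i N0.
    rewrite (ltnW iN); case: (s_steps i) => [st | e]; first exact: step_restrict.
    by right => z; rewrite /restrict e.
  rewrite (_ : p + (i.+1 - N0)%:Z = p + (i - N0)%:Z + 1); last lia.
  left; case: ifP => [iN | _]; last by apply: pumped_grow; lia.
  have -> : i = N0 by lia.
  by rewrite subnn addr0; apply: step_ext (pumped_grow (lexx p)) => z; rewrite agree_N0.
- move=> z; exists (N0.+1 + absz (z - p)%R)%N => n n_large; rewrite /u ifF; last lia.
  rewrite /restrict; case: ifP => // z_out; rewrite /pumped; case: ifP => //; lia.
Qed.

End Pumping.

Lemma repeated_tile Ts e z0 : tiled_by Ts e ->
  (forall i, (i <= size Ts)%N -> indom e (z0 + i%:Z)) ->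
  exists i j, (i < j <= size Ts)%N /\ e (z0 + i%:Z) = e (z0 + j%:Z).
Proof.
move=> Te e_dom; pose row := [seq e (z0 + i%:Z) | i <- iota 0 (size Ts).+1].
have /(uniqPn None) [i [j [ij j_row]]] : ~~ uniq row.
  apply/negP => /uniq_leq_size row_small.
  suff /row_small : {subset row <= map Some Ts} by rewrite !size_map size_iota ltnn.
  move=> o /mapP [i]; rewrite mem_iota => /andP [_ iK] ->.
  have := e_dom i iK; rewrite /indom; case E: e => [t|] // _.
  by apply/mapP; exists t => //; exact: Te E.
rewrite size_map size_iota in j_row.
rewrite !(nth_map 0%N) ?size_iota ?nth_iota //; try lia.
by rewrite !add0n => e_ij; exists i, j; rewrite ij.
Qed.

Section ChainSimulation.

Variables (Sy : system) (R : rep_fun) (N : nat).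
Hypotheses (vS : valid_system Sy) (sim : simulates Sy (chain_system N) R).

Let m_gt0 : (0 < R.1)%N.
Proof. by case: sim. Qed.

Let sim_image e : producible Sy e -> producible (chain_system N) (Rstar R e).
Proof. by case: sim => _ [_ [_ [img _]]]; exact: img. Qed.

Let sim_lift b : producible (chain_system N) b ->
  exists e, producible Sy e /\ Rstar R e =1 b.
Proof. by case: sim => _ [_ [_ [_ [lift _]]]]; exact: lift. Qed.

Let sim_lift_terminal b : terminal (chain_system N) b ->
  exists e, terminal Sy e /\ Rstar R e =1 b.
Proof. by case: sim => _ [_ [_ [_ [_ [_ [lift _]]]]]]; exact: lift. Qed.

Let sim_clean e : producible Sy e -> maps_cleanly R e.
Proof. by case: sim => _ [_ [_ [_ [_ [_ [_ [clean _]]]]]]]; exact: clean. Qed.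

Lemma image_in_segment e : producible Sy e ->
  forall x, indom (Rstar R e) x -> 0 <= x <= N%:Z.
Proof.
move=> /sim_image /chain_producible_inv [inv _ _] x; rewrite /indom.
by case E: Rstar => [t|] // _; have [-> ->] := inv _ _ E.
Qed.

Lemma empty_block_unmapped_chain : Rlook R.2 (nseq R.1 None) = None.
Proof.
have [_ _ seed_tiled _] := well_formed_seed vS.
apply: (empty_block_unmapped (y := N.+1%:Z) _ seed_tiled); first by case: sim => _ [].
apply/eqP; apply: contraT => /(image_in_segment (producible_seed Sy)); lia.
Qed.

Lemma seed_in_first_blocks z : indom (seed_asm (seed_of Sy)) z ->
  - R.1%:Z <= z < R.1%:Z * 2.
Proof.
move=> seed_z; have [e [pe image_seed]] := sim_lift (producible_seed (chain_system N)).
have [seed_sub _ _ _] := producible_well_formed vS pe.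
have e_z : indom e z.
  by move: seed_z; rewrite /indom; case E: seed_asm => [t|] // _; rewrite (seed_sub _ _ E).
have image_bound x : indom (Rstar R e) x -> 0 <= x <= 0.
  by rewrite /indom image_seed chain_seed /restrict; case: ifP => //; rewrite eqxx.
have block0 : nonempty_block R.1 e 0.
  apply: (mapped_block_nonempty empty_block_unmapped_chain).
  by rewrite /indom image_seed chain_seed.
have [x block_x z_x] := nonempty_block_indom m_gt0 e_z.
have : -1 <= x <= 1.
  have [-> // | x0] := x =P 0.
  by have := clean_block_near (sim_clean pe) image_bound block_x block0 x0.
nia.
Qed.

Lemma terminal_lift_span : exists2 e, producible Sy e &
  forall z, R.1%:Z <= z <= R.1%:Z * N%:Z -> indom e z.
Proof.
have [e [[pe _] image_full]] := sim_lift_terminal (chain_full_terminal N).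
have [_ Ie _ _] := producible_well_formed vS pe.
have mapped x : 0 <= x <= N%:Z -> nonempty_block R.1 e x.
  move=> x_in; apply: (mapped_block_nonempty empty_block_unmapped_chain).
  by rewrite /indom image_full /chain_full x_in.
have [j0 [j0_lt e_j0]] := mapped 0 isT.
have [jN [_ e_jN]] := mapped N%:Z ltac:(lia).
by exists e => // z z_in; apply: (Ie _ _ _ _ _ e_j0 e_jN); nia.
Qed.

Lemma chain_not_simulated : (size (tiles_of Sy) + 3 <= N)%N -> False.
Proof.
move=> N_large; have [e pe span] := terminal_lift_span.
have [_ Ie Te Se] := producible_well_formed vS pe.
have span_row i : (i <= size (tiles_of Sy))%N -> indom e (R.1%:Z * 2 + i%:Z).
  by move=> iK; apply: span; nia.
have [i [j [/andP [ij jK] e_ij]]] := repeated_tile Te span_row.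
pose p := R.1%:Z * 2 + i%:Z.
have d_gt0 : (0 < j - i)%N by rewrite subn_gt0.
have period : e (p + (j - i)%N%:Z) = e p by rewrite e_ij; congr e; lia.
have seed_in z : indom (seed_asm (seed_of Sy)) z -> - R.1%:Z <= z <= p.
  by move/seed_in_first_blocks; lia.
have lo_p : - R.1%:Z <= p by lia.
have e_p : indom e p by apply: span_row; lia.
have pumped_pe := pumped_producible Ie Te Se d_gt0 lo_p e_p period pe seed_in.
have far k : (N < k)%N -> nonempty_block R.1 (pumped e (- R.1%:Z) p (j - i)) k%:Z.
  move=> Nk; exists 0%N; split=> //; apply: (pumped_right Ie d_gt0 lo_p e_p period).
  nia.
have := clean_block_near (sim_clean pumped_pe) (image_in_segment pumped_pe)
  (far N.+2 _) (far N.+3 _) _.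
lia.
Qed.

End ChainSimulation.

Theorem mainTheorem9 :
  ~ exists (U : seq tile) (tau' : nat) (R : system -> rep_fun) (S : system -> seedT),
      computable_map R /\ computable_map S /\
      forall T : system, valid_system T -> directed T ->
        valid_system (U, S T, tau') /\ simulates (U, S T, tau') T (R T).
Proof.
move=> [U [tau' [R [S [_ [_ simulate_all]]]]]].
have [vS sim] := simulate_all _ (chain_valid (size U + 3)) (chain_directed _).
exact: chain_not_simulated vS sim (leqnn _).
Qed.
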